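(* Let $G$ and $H$ be rooted graphs. For any integers $g,h,k\ge 0$ and $m\ge 2$, \[ X_{S^{ghk}(G,H,C_m)}=(m-1)\,X_{S^{gh}_{k+m-1}(G,H)}-\sum_{l=1}^{m-2}X_{S^{gh}_{k+l-1}(G,H)}\,X_{C_{m-l}}. \]
   Context: All graphs are finite simple graphs. The chromatic symmetric function of a graph $G$ is $X_G=\sum_{\kappa}\prod_{v\in V(G)}x_{\kappa(v)}$, where $\kappa$ ranges over proper colorings $\kappa:V(G)\to\{1,2,\dots\}$. $C_m$ is the cycle on $m$ vertices for $m\ge3$, $C_2:=K_2$, rooted at any vertex. For nonnegative integers $\tau_1,\tau_2,\tau_3$ and rooted graphs $(G_i,u_i)$, $S^{\tau_1\tau_2\tau_3}(G_1,G_2,G_3)$ is obtained by taking a center vertex $c$ and three paths from $c$, disjoint except at $c$, of lengths $\tau_1,\tau_2,\tau_3$, and identifying $u_i$ with the far end of the $i$-th path (with $c$ itself if $\tau_i=0$), the $G_i$ being disjoint. $S^{gh}_{j}(G,H)$ denotes $S^{ghj}(G,H,K_1)$, i.e., the third leg is a plain path of length $j$ ending in a leaf. *)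

From HB Require Import structures.
From mathcomp Require Import all_boot all_order all_algebra.
From mathcomp Require Import mpoly.
Record rooted_graph := RGraph { vert : finType; adj : rel vert; root : vert }.
Set Implicit Arguments. Unset Strict Implicit. Unset Printing Implicit Defensive.
Import GRing.Theory.
Local Open Scope ring_scope.


Definition simple_graph (G : rooted_graph) : Prop :=
  irreflexive (adj G) /\ ssrbool.symmetric (adj G).

Definition proper (G : rooted_graph) (n : nat) (k : {ffun vert G -> 'I_n}) : bool :=
  [forall u, forall v, adj G u v ==> (k u != k v)].

(* The chromatic symmetric function X_G, truncated to the n variables
   x_0, ..., x_{n-1} (i.e. all other variables set to 0). *)
Definition chromsym (n : nat) (G : rooted_graph) : {mpoly int[n]} :=
  \sum_(k : {ffun vert G -> 'I_n} | proper k) \prod_(v : vert G) 'X_(k v).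

Definition K1 : rooted_graph := @RGraph unit (fun _ _ => false) tt.

(* C_m (for m >= 2; C_2 = K_2), vertices 0..m-1, rooted at 0 *)
Definition cycle_graph (m : nat) : rooted_graph :=
  @RGraph 'I_m.-1.+1
    (fun i j => (i != j) && ((val j == ((val i).+1 %% m.-1.+1)%N)
                          || (val i == ((val j).+1 %% m.-1.+1)%N)))
    ord0.

(* One leg: path vertices p_1..p_t (indexed by 'I_t, index j standing for
   p_{j+1}), together with the non-root vertices of G.  The root of G is
   identified with p_t (or with the centre if t = 0). In option (leg_t G t),
   None stands for the centre c. *)
Definition leg_t (G : rooted_graph) (t : nat) : finType :=
  ('I_t + {v : vert G | v != root G})%type.

(* position p_j on the path (p_0 = centre) *)
Definition leg_pos (G : rooted_graph) (t : nat) (j : nat) : option (leg_t G t) :=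
  if j is j'.+1 then
    (if (insub j' : option 'I_t) is Some o then Some (inl o) else None)
  else None.

Definition leg_emb (G : rooted_graph) (t : nat) (v : vert G) : option (leg_t G t) :=
  if (insub v : option {x : vert G | x != root G}) is Some w then Some (inr w)
  else leg_pos G t t.

Definition leg_adj (G : rooted_graph) (t : nat) (x y : option (leg_t G t)) : bool :=
  [exists a : vert G, exists b : vert G,
     [&& adj G a b, leg_emb t a == x & leg_emb t b == y]]
  || [exists j : 'I_t,
        ((leg_pos G t j == x) && (leg_pos G t (j.+1)%N == y))
        || ((leg_pos G t (j.+1)%N == x) && (leg_pos G t j == y))].

Definition spider_t (t1 t2 t3 : nat) (G1 G2 G3 : rooted_graph) : finType :=
  option (leg_t G1 t1 + leg_t G2 t2 + leg_t G3 t3)%type.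

Definition lift1 t1 t2 t3 G1 G2 G3 (x : option (leg_t G1 t1)) :
  spider_t t1 t2 t3 G1 G2 G3 := omap (fun a => inl (inl a)) x.
Definition lift2 t1 t2 t3 G1 G2 G3 (x : option (leg_t G2 t2)) :
  spider_t t1 t2 t3 G1 G2 G3 := omap (fun a => inl (inr a)) x.
Definition lift3 t1 t2 t3 G1 G2 G3 (x : option (leg_t G3 t3)) :
  spider_t t1 t2 t3 G1 G2 G3 := omap (fun a => inr a) x.

Definition spider_adj t1 t2 t3 G1 G2 G3 (x y : spider_t t1 t2 t3 G1 G2 G3) :
  bool :=
  [exists p, exists q, [&& leg_adj p q, lift1 t2 t3 G2 G3 p == x
                                      & lift1 t2 t3 G2 G3 q == y]]
  || [exists p, exists q, [&& leg_adj p q, lift2 t1 t3 G1 G3 p == x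
                                         & lift2 t1 t3 G1 G3 q == y]]
  || [exists p, exists q, [&& leg_adj p q, lift3 t1 t2 G1 G2 p == x
                                         & lift3 t1 t2 G1 G2 q == y]].

Definition spider (t1 t2 t3 : nat) (G1 G2 G3 : rooted_graph) : rooted_graph :=
  @RGraph (spider_t t1 t2 t3 G1 G2 G3) (@spider_adj t1 t2 t3 G1 G2 G3) None.

Definition spider2 (g h j : nat) (G H : rooted_graph) : rooted_graph := spider g h j G H K1.

(* Colour the centre first: with the centre coloured c the legs are coloured independently,
   so X_S = sum_c x_c L_1(c) L_2(c) L_3(c), where the polynomial L(c) of a leg counts a proper
   walk p_1 ... p_t leaving colour c followed by a colouring of the end graph whose root has
   the last colour of the walk.  Hence the identity reduces, colour by colour, to one for the
   leg ending in C_m, m = s + 2.  A colouring of C_m with root colour e is a walk of length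
   s + 1 from e that does not end at e, so everything comes down to expanding the closed walks
     E_{s+1}(e) = sum_{j<s} P_j(e) X_{C_{s+1-j}} - s P_{s+1}(e),
   where P_t(e) is the total weight of walks of length t from e.  This follows by induction
   on s from E_{t+1}(e) = x_e (P_t(e) - E_t(e)) and P_{t+1}(e) = X_{P_{t+1}} - x_e P_t(e);
   the induction step also needs (s+1) X_{P_{s+2}} = sum_{j<=s} X_{P_j} X_{C_{s+2-j}}, which
   is the expansion at s multiplied by x_e and summed over e. *)

From Pilot Require Import Defs.
From mathcomp Require Import all_boot all_order all_algebra.
From mathcomp Require Import mpoly ring zify.
Import GRing.Theory.
Local Open Scope ring_scope.

Set Implicit Arguments.
Unset Strict Implicit.
Unset Printing Implicit Defensive.

Local Notation nonroot G := {v : vert G | v != Defs.root G}.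

Section FfunSums.
Variables (C : finType) (V : nmodType).

Definition ffun_option (A : finType) (c : C) (g : {ffun A -> C}) : {ffun option A -> C} :=
  [ffun x => if x is Some a then g a else c].

Definition ffun_case (A B : finType) (g : {ffun A -> C}) (h : {ffun B -> C}) :
  {ffun (A + B)%type -> C} :=
  [ffun x => match x with inl a => g a | inr b => h b end].

Lemma big_ffun_bij (A B : finType) (s : A -> B) (t : B -> A) :
  cancel s t -> cancel t s ->
  forall (P : pred {ffun A -> C}) (F : {ffun A -> C} -> V),
  \sum_(f | P f) F f =
  \sum_(g : {ffun B -> C} | P [ffun a => g (s a)]) F [ffun a => g (s a)].
Proof.
move=> st ts P F; rewrite (reindex (fun g : {ffun B -> C} => [ffun a => g (s a)])) //.
exists (fun f : {ffun A -> C} => [ffun b => f (t b)]) => f _;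
  by apply/ffunP => x; rewrite !ffunE ?ts ?st.
Qed.

Lemma big_ffun_option (A : finType) (P : pred {ffun option A -> C})
    (F : {ffun option A -> C} -> V) :
  \sum_(f | P f) F f =
  \sum_(c : C) \sum_(g : {ffun A -> C} | P (ffun_option c g)) F (ffun_option c g).
Proof.
rewrite pair_big_dep /= (reindex (fun p => ffun_option p.1 p.2)) //.
exists (fun f : {ffun option A -> C} => (f None, [ffun a => f (Some a)])).
  by move=> [c g] _; rewrite /ffun_option ffunE; congr (_, _); apply/ffunP => a; rewrite !ffunE.
by move=> f _; apply/ffunP => -[a|]; rewrite /ffun_option !ffunE.
Qed.

Lemma big_ffun_case (A B : finType) (P : pred {ffun (A + B)%type -> C})
    (F : {ffun (A + B)%type -> C} -> V) :
  \sum_(f | P f) F f =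
  \sum_(g : {ffun A -> C}) \sum_(h : {ffun B -> C} | P (ffun_case g h)) F (ffun_case g h).
Proof.
rewrite pair_big_dep /= (reindex (fun p => ffun_case p.1 p.2)) //.
exists (fun f : {ffun (A + B)%type -> C} => ([ffun a => f (inl a)], [ffun b => f (inr b)])).
  by move=> [g h] _; congr (_, _); apply/ffunP => a; rewrite !ffunE.
by move=> f _; apply/ffunP => -[a|b]; rewrite !ffunE.
Qed.

Definition ffun_cons (t : nat) (c : C) (g : {ffun 'I_t -> C}) : {ffun 'I_t.+1 -> C} :=
  [ffun i => ffun_option c g (unlift ord0 i)].

Lemma ffun_cons0 t c (g : {ffun 'I_t -> C}) : ffun_cons c g ord0 = c.
Proof. by rewrite !ffunE unlift_none. Qed.

Lemma ffun_cons_lift t c (g : {ffun 'I_t -> C}) i : ffun_cons c g (lift ord0 i) = g i.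
Proof. by rewrite !ffunE liftK. Qed.

Lemma big_ffun_cons t (P : pred {ffun 'I_t.+1 -> C}) (F : {ffun 'I_t.+1 -> C} -> V) :
  \sum_(f | P f) F f =
  \sum_(c : C) \sum_(g : {ffun 'I_t -> C} | P (ffun_cons c g)) F (ffun_cons c g).
Proof.
pose cons_index (o : option 'I_t) := if o is Some i then lift ord0 i else ord0.
have unliftK : cancel (unlift ord0) cons_index.
  by move=> i; case: (unliftP ord0 i) => [j ->|->]; rewrite ?liftK ?unlift_none.
have cons_indexK : cancel cons_index (unlift ord0).
  by case=> [j|]; rewrite /= ?liftK ?unlift_none.
by rewrite (big_ffun_bij unliftK cons_indexK) big_ffun_option.
Qed.

End FfunSums.

Lemma big_option (V : Type) (idx : V) (op : Monoid.com_law idx) (A : finType)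
    (F : option A -> V) :
  \big[op/idx]_(x : option A) F x = op (F None) (\big[op/idx]_(a : A) F (Some a)).
Proof.
rewrite (bigD1 None) //= (reindex_omap Some id) //=; last by case.
by under eq_bigl do rewrite eqxx.
Qed.

Lemma big_and3_mul (R : comPzSemiRingType) (A B C : finType) (P1 : pred A) (P2 : pred B)
    (P3 : pred C) (F1 : A -> R) (F2 : B -> R) (F3 : C -> R) :
  \sum_a \sum_b \sum_(c | [&& P1 a, P2 b & P3 c]) F1 a * F2 b * F3 c =
  (\sum_(a | P1 a) F1 a) * (\sum_(b | P2 b) F2 b) * (\sum_(c | P3 c) F3 c).
Proof.
rewrite !big_distrl [RHS]big_mkcond /=; apply: eq_bigr => a _.
case: (P1 a) => /=; last by rewrite big1 // => b _; rewrite big_pred0.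
rewrite (big_distrr (F1 a)) big_distrl [RHS]big_mkcond /=; apply: eq_bigr => b _.
case: (P2 b) => /=; last by rewrite big_pred0.
by rewrite big_distrr.
Qed.

Lemma big_nonroot (V : Type) (idx : V) (op : Monoid.com_law idx) (G : rooted_graph)
    (F : vert G -> V) :
  \big[op/idx]_(v : vert G) F v = op (F (Defs.root G)) (\big[op/idx]_(w : nonroot G) F (val w)).
Proof.
rewrite (bigD1 (Defs.root G)) //=; congr (op _ _).
rewrite (reindex_omap (val : nonroot G -> vert G) insub) /=; last first.
  by move=> v nv; rewrite insubT.
by apply: eq_bigl => w; rewrite (valP w) valK eqxx.
Qed.

Definition proper_for (T : finType) (C : eqType) (r : rel T) (k : T -> C) : bool :=
  [forall x, forall y, r x y ==> (k x != k y)].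

Section ProperColorings.
Variables (T : finType) (C : eqType).

Lemma eq_proper_for (r : rel T) (k1 k2 : T -> C) :
  k1 =1 k2 -> proper_for r k1 = proper_for r k2.
Proof. by move=> ek; apply: eq_forallb => x; apply: eq_forallb => y; rewrite !ek. Qed.

Lemma proper_forU (r1 r2 : rel T) (k : T -> C) :
  proper_for (fun x y => r1 x y || r2 x y) k = proper_for r1 k && proper_for r2 k.
Proof.
rewrite /proper_for; apply/forallP/andP => [H|[/forallP H1 /forallP H2] x].
  by split; apply/forallP => x; apply/forallP => y; apply/implyP => rxy;
    move: (H x) => /forallP/(_ y)/implyP; apply; rewrite rxy ?orbT.
apply/forallP => y; apply/implyP => /orP[rxy|rxy].
  by move: (H1 x) => /forallP/(_ y)/implyP; apply.
by move: (H2 x) => /forallP/(_ y)/implyP; apply.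
Qed.

Lemma proper_for_image (S : finType) (f : S -> T) (r : rel S) (k : T -> C) :
  proper_for (fun x y => [exists p, exists q, [&& r p q, f p == x & f q == y]]) k
  = proper_for r (k \o f).
Proof.
rewrite /proper_for; apply/forallP/forallP => H p.
  apply/forallP => q; apply/implyP => rpq; move: (H (f p)) => /forallP/(_ (f q))/implyP.
  by apply; apply/existsP; exists p; apply/existsP; exists q; rewrite rpq !eqxx.
apply/forallP => y; apply/implyP => /existsP[p' /existsP[q /and3P[rpq /eqP<- /eqP<-]]].
by move: (H p') => /forallP/(_ q)/implyP; apply.
Qed.

Lemma proper_for_edges (J : finType) (a b : J -> T) (k : T -> C) :
  proper_for (fun x y => [exists j, ((a j == x) && (b j == y)) || ((b j == x) && (a j == y))]) k
  = [forall j, k (a j) != k (b j)].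
Proof.
rewrite /proper_for; apply/forallP/forallP => H j.
  move: (H (a j)) => /forallP/(_ (b j))/implyP; apply.
  by apply/existsP; exists j; rewrite !eqxx.
apply/forallP => y; apply/implyP => /existsP[i /orP[]/andP[/eqP<- /eqP<-]].
  exact: H.
by rewrite eq_sym; apply: H.
Qed.

End ProperColorings.

Section Colorings.
Variable n : nat.
Local Notation I := 'I_n.
Local Notation R := {mpoly int[n]}.

(* The colour of p_j on a path p_0 p_1 ... p_t, where p_0 has colour c and g i colours
   p_(i+1). *)
Definition path_col (t : nat) (c : I) (g : {ffun 'I_t -> I}) (j : nat) : I :=
  if j is j'.+1 then (if insub j' is Some o then g o else c) else c.

Arguments path_col : simpl never.

Definition path_proper (t : nat) (c : I) (g : {ffun 'I_t -> I}) : bool :=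
  [forall j : 'I_t, path_col c g j != path_col c g j.+1].

(* Sum, over the proper colourings of p_1 ... p_t with p_t coloured e, of the product of the
   x's of p_1 ... p_t, when p_0 has colour c. *)
Fixpoint walk (t : nat) (c e : I) : R :=
  if t is t'.+1 then \sum_(a | a != c) 'X_a * walk t' a e else (c == e)%:R.

Lemma sum_delta (P : pred I) (F : I -> R) (e : I) :
  \sum_(a | P a) F a * (a == e)%:R = (P e)%:R * F e.
Proof.
rewrite big_mkcond (bigD1 e) //= big1 ?addr0; last first.
  by move=> a /negbTE ->; case: (P a); rewrite ?mulr0.
by rewrite eqxx mulr1; case: (P e); rewrite ?mul1r ?mul0r.
Qed.

Lemma sum_walk0 (c : I) (F : I -> R) : \sum_e walk 0 c e * F e = F c.
Proof. by under eq_bigr => e _ do rewrite mulrC /= eq_sym; rewrite sum_delta mul1r. Qed.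

Lemma path_col0 t c (g : {ffun 'I_t -> I}) : path_col c g 0 = c.
Proof. by []. Qed.

Lemma path_colS t c (g : {ffun 'I_t -> I}) (o : 'I_t) : path_col c g o.+1 = g o.
Proof. by rewrite /path_col valK. Qed.

Lemma path_col_cons t c c0 (g : {ffun 'I_t -> I}) (j : nat) : (j <= t)%N ->
  path_col c (ffun_cons c0 g) j.+1 = path_col c0 g j.
Proof.
case: j => [|j] lt_jt; first by rewrite (path_colS _ _ ord0) ffun_cons0.
by rewrite (path_colS _ _ (Ordinal lt_jt)) -(ffun_cons_lift c0) -(path_colS c) lift0.
Qed.

Lemma path_proper_cons t c c0 (g : {ffun 'I_t -> I}) :
  path_proper c (ffun_cons c0 g) = (c != c0) && path_proper c0 g.
Proof.
have liftE (i : 'I_t) :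
    (path_col c (ffun_cons c0 g) (lift ord0 i) != path_col c (ffun_cons c0 g) (lift ord0 i).+1)
    = (path_col c0 g i != path_col c0 g i.+1).
  by rewrite lift0 !path_col_cons // ltnW.
apply/forallP/andP => [proper|[ne_cc0 /forallP proper] j].
  split; first by move: (proper ord0); rewrite (path_colS _ _ ord0) ffun_cons0.
  by apply/forallP => i; rewrite -liftE.
case: (unliftP ord0 j) => [i ->|->]; first by rewrite liftE.
by rewrite path_col0 (path_colS _ _ ord0) ffun_cons0.
Qed.

Lemma sum_proper_paths t c (F : I -> R) :
  \sum_(g : {ffun 'I_t -> I} | path_proper c g) (\prod_i 'X_(g i)) * F (path_col c g t)
  = \sum_e walk t c e * F e.
Proof.
elim: t c F => [|t IH] c F.
  rewrite (big_pred1 [ffun _ => c]) => [|g]; last first.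
    by apply/forallP/eqP => [_|_ []//]; apply/ffunP => -[].
  by rewrite big_ord0 mul1r path_col0 sum_walk0.
rewrite big_ffun_cons (bigID (fun c0 => c0 != c)) /= [X in _ + X]big1 ?addr0; last first.
  by move=> c0 /negbNE/eqP ->; apply: big_pred0 => g; rewrite path_proper_cons eqxx.
transitivity (\sum_(c0 | c0 != c) 'X_c0 * \sum_e walk t c0 e * F e); last first.
  under [RHS]eq_bigr => e _ do rewrite big_distrl.
  rewrite exchange_big /=; apply: eq_bigr => a _.
  by rewrite big_distrr; apply: eq_bigr => e _; exact: mulrA.
apply: eq_bigr => c0 ne_c0c; rewrite -IH big_distrr /=; apply: eq_big => [g|g _].
  by rewrite path_proper_cons eq_sym ne_c0c.
rewrite big_ord_recl ffun_cons0 path_col_cons // mulrA; congr (_ * _ * _).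
by apply: eq_bigr => i _; rewrite ffun_cons_lift.
Qed.

Definition walks_from (t : nat) (c : I) : R := \sum_e walk t c e.

Definition closed_walks (t : nat) (d : I) : R := walk t d d.

(* The chromatic symmetric function of the path on j vertices. *)
Definition path_poly (j : nat) : R :=
  if j is j'.+1 then \sum_e 'X_e * walks_from j' e else 1.

Definition cycle_poly (k : nat) : R :=
  \sum_d 'X_d * (walks_from k.-1 d - closed_walks k.-1 d).

Lemma walkS t (c e : I) : walk t.+1 c e = \sum_(a | a != c) 'X_a * walk t a e.
Proof. by []. Qed.

Lemma walk_last t (c e : I) : walk t.+1 c e = (\sum_(a | a != e) walk t c a) * 'X_e.
Proof.
elim: t c => [|t IH] c.
  rewrite /= sum_delta; under eq_bigr => a _ do rewrite eq_sym -[_%:R]mulr1 mulrC.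
  by rewrite sum_delta mulr1 (eq_sym e c).
rewrite walkS; under eq_bigr => a _ do rewrite IH mulrA.
rewrite -big_distrl /= exchange_big /=; congr (_ * _).
by apply: eq_bigr => b _; rewrite big_distrr.
Qed.

Lemma walkD k j (c f : I) : walk (k + j) c f = \sum_e walk k c e * walk j e f.
Proof.
elim: k c => [|k IH] c; first by rewrite sum_walk0.
rewrite addSn walkS; under eq_bigr => a _ do rewrite IH big_distrr.
rewrite exchange_big; apply: eq_bigr => e _ /=.
by rewrite big_distrl; apply: eq_bigr => a _; rewrite mulrA.
Qed.

Lemma walks_fromD k j (c : I) : walks_from (k + j) c = \sum_e walk k c e * walks_from j e.
Proof.
rewrite /walks_from; under eq_bigr => f _ do rewrite walkD.
by rewrite exchange_big; apply: eq_bigr => e _; rewrite big_distrr.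
Qed.

Lemma walks_from0 (c : I) : walks_from 0 c = 1.
Proof.
by rewrite /walks_from -[RHS](sum_walk0 c (fun=> 1)); apply: eq_bigr => e _; rewrite mulr1.
Qed.

Lemma walks_fromS t (c : I) : walks_from t.+1 c = path_poly t.+1 - 'X_c * walks_from t c.
Proof.
have -> : walks_from t.+1 c = \sum_(a | a != c) 'X_a * walks_from t a.
  rewrite /walks_from exchange_big /=; apply: eq_bigr => a _; by rewrite big_distrr.
by rewrite /path_poly [in RHS](bigD1 c) //= addrC addrK.
Qed.

Lemma closed_walksS t (d : I) :
  closed_walks t.+1 d = 'X_d * (walks_from t d - closed_walks t d).
Proof.
by rewrite /closed_walks walk_last /walks_from [in RHS](bigD1 d) //= addrC addrK mulrC.
Qed.

Lemma sum_X_closed_walks t :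
  \sum_e 'X_e * closed_walks t.+1 e = path_poly t.+2 - cycle_poly t.+2.
Proof.
rewrite /cycle_poly /path_poly /=.
under [X in _ = _ - X]eq_bigr => d _ do rewrite mulrBr.
by rewrite sumrB opprB addrC subrK.
Qed.

Lemma sum_closed_walks_expansion s :
  (forall e, closed_walks s.+1 e =
     \sum_(j < s) walks_from j e * cycle_poly (s.+1 - j) - s%:R * walks_from s.+1 e) ->
  s.+1%:R * path_poly s.+2 = \sum_(j < s.+1) path_poly j * cycle_poly (s.+2 - j).
Proof.
move=> closedE.
pose A := \sum_(j < s) path_poly j.+1 * cycle_poly (s.+1 - j).
have summed : path_poly s.+2 - cycle_poly s.+2 = A - s%:R * path_poly s.+2.
  rewrite -sum_X_closed_walks; under eq_bigr => e _ do rewrite closedE mulrBr.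
  rewrite sumrB; congr (_ - _).
    under eq_bigr => e _ do rewrite big_distrr.
    rewrite exchange_big /=; apply: eq_bigr => j _.
    by rewrite /path_poly big_distrl; apply: eq_bigr => e _ /=; rewrite mulrA.
  by rewrite /path_poly big_distrr; apply: eq_bigr => e _ /=; rewrite mulrCA.
rewrite big_ord_recl mul1r subn0.
under eq_bigr => j _ do rewrite lift0 subSS.
rewrite -/A.
have -> : A = path_poly s.+2 - cycle_poly s.+2 + s%:R * path_poly s.+2 by rewrite summed subrK.
rewrite -natr1; ring.
Qed.

Lemma closed_walks_expansionS s :
  (forall e, closed_walks s.+1 e =
     \sum_(j < s) walks_from j e * cycle_poly (s.+1 - j) - s%:R * walks_from s.+1 e) ->
  forall e, closed_walks s.+2 e =
     \sum_(j < s.+1) walks_from j e * cycle_poly (s.+2 - j) - s.+1%:R * walks_from s.+2 e.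
Proof.
move=> closedE e.
have := sum_closed_walks_expansion closedE.
rewrite big_ord_recl mul1r subn0; under eq_bigr => j _ do rewrite lift0 subSS.
move=> pathE.
rewrite big_ord_recl walks_from0 mul1r subn0.
under eq_bigr => j _ do rewrite lift0 subSS walks_fromS mulrBl -mulrA.
rewrite sumrB -big_distrr /= closed_walksS closedE (walks_fromS s.+1).
set A := \sum_(j < s) path_poly j.+1 * _.
have -> : A = s.+1%:R * path_poly s.+2 - cycle_poly s.+2 by rewrite pathE addrC addKr.
rewrite -natr1; ring.
Qed.

Lemma closed_walks_expansion s (e : I) :
  closed_walks s.+1 e =
  \sum_(j < s) walks_from j e * cycle_poly (s.+1 - j) - s%:R * walks_from s.+1 e.
Proof.
elim: s e => [|s IH] e; last exact: closed_walks_expansionS.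
by rewrite closed_walksS walks_from0 /closed_walks /= eqxx subrr mulr0 big_ord0 mul0r subr0.
Qed.

Definition with_root (G : rooted_graph) (e : I) (h : {ffun nonroot G -> I}) (v : vert G) : I :=
  ffun_option e h (insub v).

Definition rooted_chromsym (G : rooted_graph) (e : I) : R :=
  \sum_(h : {ffun nonroot G -> I} | proper_for (adj G) (with_root e h)) \prod_w 'X_(h w).

Lemma with_root_root G e (h : {ffun nonroot G -> I}) : with_root e h (Defs.root G) = e.
Proof. by rewrite /with_root insubF ?eqxx // ffunE. Qed.

Lemma with_root_val G e (h : {ffun nonroot G -> I}) w : with_root e h (val w) = h w.
Proof. by rewrite /with_root valK ffunE. Qed.

Lemma chromsym_by_root_color G : chromsym n G = \sum_e 'X_e * rooted_chromsym G e.
Proof.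
pose unroot (v : vert G) : option (nonroot G) := insub v.
pose reroot (o : option (nonroot G)) := if o is Some w then val w else Defs.root G.
have unrootK : cancel unroot reroot.
  move=> v; rewrite /unroot /reroot; case: insubP => [w _ ->|/negPn/eqP->] //.
have rerootK : cancel reroot unroot.
  by case=> [w|]; rewrite /unroot /reroot ?valK ?insubF ?eqxx.
rewrite /chromsym (big_ffun_bij unrootK rerootK) big_ffun_option.
apply: eq_bigr => e _; rewrite /rooted_chromsym big_distrr.
apply: eq_big => [h|h _]; first by apply: eq_proper_for => v; rewrite ffunE.
rewrite big_nonroot /= ffunE; congr ('X_ _ * _); first exact: with_root_root.
by apply: eq_bigr => w _; rewrite ffunE; congr 'X_ _; exact: with_root_val.
Qed.

Definition leg_chromsym (G : rooted_graph) (t : nat) (c : I) : R :=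
  \sum_(f : {ffun leg_t G t -> I} | proper_for (@leg_adj G t) (ffun_option c f))
    \prod_x 'X_(f x).

Section LegColoring.
Variables (G : rooted_graph) (t : nat) (c : I).
Variables (g : {ffun 'I_t -> I}) (h : {ffun nonroot G -> I}).
Local Notation k := (ffun_option c (ffun_case g h)).

Lemma leg_color_pos j : k (leg_pos G t j) = path_col c g j.
Proof.
case: j => [|j]; first by rewrite ffunE.
by rewrite /leg_pos /path_col; case: insub => [o|]; rewrite !ffunE.
Qed.

Lemma leg_color_emb a : k (leg_emb t a) = with_root (path_col c g t) h a.
Proof.
by rewrite /leg_emb /with_root; case: insub => [w|]; rewrite ?leg_color_pos !ffunE.
Qed.

Lemma proper_leg_color :
  proper_for (@leg_adj G t) k =
  path_proper c g && proper_for (adj G) (with_root (path_col c g t) h).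
Proof.
rewrite /leg_adj proper_forU proper_for_image proper_for_edges andbC; congr (_ && _).
  by apply: eq_forallb => j; rewrite !leg_color_pos.
by apply: eq_proper_for => a; rewrite /= leg_color_emb.
Qed.

End LegColoring.

Lemma leg_chromsymE G t c :
  leg_chromsym G t c = \sum_e walk t c e * rooted_chromsym G e.
Proof.
rewrite -sum_proper_paths /leg_chromsym big_ffun_case.
rewrite [RHS]big_mkcond; apply: eq_bigr => g _; rewrite (eq_bigl _ _ (proper_leg_color c g)).
case: (path_proper c g) => /=; last by rewrite big_pred0.
rewrite /rooted_chromsym big_distrr; apply: eq_bigr => h _.
by rewrite big_sumType; congr (_ * _); apply: eq_bigr => x _; rewrite ffunE.
Qed.

Section Spiders.
Variables (t1 t2 t3 : nat) (G1 G2 G3 : rooted_graph).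

Lemma proper_spider_color (c : I) (g1 : {ffun leg_t G1 t1 -> I}) (g2 : {ffun leg_t G2 t2 -> I})
    (g3 : {ffun leg_t G3 t3 -> I}) :
  @Defs.proper (spider t1 t2 t3 G1 G2 G3) n (ffun_option c (ffun_case (ffun_case g1 g2) g3))
  = [&& proper_for (@leg_adj G1 t1) (ffun_option c g1),
        proper_for (@leg_adj G2 t2) (ffun_option c g2)
      & proper_for (@leg_adj G3 t3) (ffun_option c g3)].
Proof.
rewrite /Defs.proper -/(proper_for _ _) /=.
set rhs := (X in _ = X); rewrite /spider_adj !proper_forU !proper_for_image -andbA {}/rhs.
by congr [&& _, _ & _]; apply: eq_proper_for => -[x|] /=; rewrite !ffunE.
Qed.

Lemma chromsym_spider :
  chromsym n (spider t1 t2 t3 G1 G2 G3) =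
  \sum_c 'X_c * (leg_chromsym G1 t1 c * leg_chromsym G2 t2 c * leg_chromsym G3 t3 c).
Proof.
rewrite /chromsym big_ffun_option; apply: eq_bigr => c _.
rewrite big_ffun_case big_ffun_case.
under eq_bigr => g1 _ do under eq_bigr => g2 _ do
  rewrite (eq_bigl _ _ (proper_spider_color c g1 g2)).
rewrite /leg_chromsym -big_and3_mul big_distrr; apply: eq_bigr => g1 _.
rewrite big_distrr; apply: eq_bigr => g2 _.
rewrite big_distrr; apply: eq_bigr => g3 _.
rewrite big_option 2!big_sumType /= ffunE !mulrA.
by congr (_ * _ * _ * _); apply: eq_bigr => x _; rewrite !ffunE.
Qed.
End Spiders.

Lemma rooted_chromsym_K1 (e : I) : rooted_chromsym K1 e = 1.
Proof.
rewrite /rooted_chromsym (big_pred1 [ffun _ => e]) => [|h].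
  by apply: big1 => -[[] ne]; move: ne.
apply/idP/eqP => _; first by apply/ffunP => -[[] ne]; move: ne.
by apply/forallP => a; apply/forallP.
Qed.

Lemma leg_chromsym_K1 j (c : I) : leg_chromsym K1 j c = walks_from j c.
Proof. by rewrite leg_chromsymE; apply: eq_bigr => e _; rewrite rooted_chromsym_K1 mulr1. Qed.

Lemma proper_cycle_color s (e : I) (g : {ffun 'I_s.+1 -> I}) :
  proper_for (adj (cycle_graph s.+2)) (fun v => path_col e g v)
  = path_proper e g && (path_col e g s.+1 != e).
Proof.
apply/forallP/andP => [proper|[/forallP path_ok last_ok] x].
  split; last first.
    by move: (proper ord_max) => /forallP/(_ ord0)/implyP; apply; rewrite /= modnn eqxx.
  apply/forallP => j; move: (proper (widen_ord (leqnSn _) j)).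
  move=> /forallP/(_ (lift ord0 j))/implyP; rewrite lift0; apply.
  rewrite /= -val_eqE /= /bump /= add1n (ltn_eqF (ltnSn j)).
  by rewrite (modn_small (ltn_ord j : (j.+1 < s.+2)%N)) eqxx.
have succ_ok (y z : 'I_s.+2) : val z = (y.+1 %% s.+2)%N -> path_col e g y != path_col e g z.
  case: (ltnP y s.+1) => [lt_ys|le_sy].
    by rewrite modn_small // => ->; apply: (path_ok (Ordinal lt_ys)).
  have /eqP -> : val y == s.+1 by rewrite eqn_leq le_sy -ltnS ltn_ord.
  by rewrite modnn => ->.
apply/forallP => y; apply/implyP => /andP[_ /orP[/eqP|/eqP]]; first exact: succ_ok.
by rewrite eq_sym; apply: succ_ok.
Qed.

Lemma rooted_chromsym_cycle_paths s (e : I) :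
  rooted_chromsym (cycle_graph s.+2) e =
  \sum_(g : {ffun 'I_s.+1 -> I} | path_proper e g)
     (\prod_i 'X_(g i)) * (path_col e g s.+1 != e)%:R.
Proof.
pose C := cycle_graph s.+2.
have lift_nonroot (i : 'I_s.+1) : lift ord0 i != Defs.root C by rewrite eq_sym neq_lift.
pose tau i : nonroot C := exist _ (lift ord0 i) (lift_nonroot i).
pose sigma (w : nonroot C) : 'I_s.+1 := odflt ord0 (unlift ord0 (val w)).
have tauK : cancel tau sigma by move=> i; rewrite /sigma /= liftK.
have sigmaK : cancel sigma tau.
  move=> [v nv]; apply: val_inj; rewrite /sigma /=.
  have nv0 : ord0 != v by rewrite eq_sym.
  by case: (unlift_some nv0) => i liftE ->.
have colE (g : {ffun 'I_s.+1 -> I}) (v : vert C) :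
    with_root e [ffun w => g (sigma w)] v = path_col e g v.
  case: (unliftP ord0 v) => [i ->|->]; last by rewrite with_root_root.
  by rewrite -[lift ord0 i]/(val (tau i)) with_root_val ffunE tauK lift0 path_colS.
rewrite /rooted_chromsym (big_ffun_bij sigmaK tauK) big_mkcond [RHS]big_mkcond.
apply: eq_bigr => g _; rewrite (eq_proper_for _ (colE g)) proper_cycle_color.
rewrite (reindex tau) /=; last by exists sigma => ? _.
under eq_bigr => i _ do rewrite ffunE tauK.
by case: (path_proper e g); case: (_ != e); rewrite ?mulr1 ?mulr0.
Qed.

Lemma rooted_chromsym_cycle s (e : I) :
  rooted_chromsym (cycle_graph s.+2) e = walks_from s.+1 e - closed_walks s.+1 e.
Proof.
rewrite rooted_chromsym_cycle_paths (sum_proper_paths s.+1 e (fun f => (f != e)%:R)).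
rewrite /walks_from /closed_walks (bigD1 e) //= eqxx mulr0 add0r.
by rewrite [X in _ = X - _](bigD1 e) //= addrC addrK; apply: eq_bigr => f ->; rewrite mulr1.
Qed.

Lemma chromsym_cycle s : chromsym n (cycle_graph s.+2) = cycle_poly s.+2.
Proof.
by rewrite chromsym_by_root_color; apply: eq_bigr => d _; rewrite rooted_chromsym_cycle.
Qed.

Lemma rooted_chromsym_cycle_expansion s (e : I) :
  rooted_chromsym (cycle_graph s.+2) e =
  s.+1%:R * walks_from s.+1 e - \sum_(j < s) walks_from j e * cycle_poly (s.+1 - j).
Proof. by rewrite rooted_chromsym_cycle closed_walks_expansion -natr1; ring. Qed.

Lemma leg_chromsym_cycle s k (c : I) :
  leg_chromsym (cycle_graph s.+2) k c =
  s.+1%:R * walks_from (k + s.+1) c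
  - \sum_(j < s) walks_from (k + j) c * cycle_poly (s.+1 - j).
Proof.
rewrite leg_chromsymE; under eq_bigr => e _ do rewrite rooted_chromsym_cycle_expansion mulrBr.
rewrite sumrB walks_fromD big_distrr /=; congr (_ - _).
  by apply: eq_bigr => e _; rewrite mulrCA.
under [RHS]eq_bigr => j _ do rewrite walks_fromD big_distrl.
rewrite /= exchange_big; apply: eq_bigr => e _.
by rewrite big_distrr; apply: eq_bigr => j _; rewrite /= mulrA.
Qed.

End Colorings.

Unset Implicit Arguments.

Theorem theorem4p8 (G H : rooted_graph) (g h k m : nat) :
  simple_graph G -> simple_graph H -> (2 <= m)%N ->
  forall n : nat,
    chromsym n (spider g h k G H (cycle_graph m))
    = (m.-1)%:R * chromsym n (spider2 g h (k + m - 1) G H)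
      - \sum_(1 <= l < m.-1)
          chromsym n (spider2 g h (k + l - 1) G H) * chromsym n (cycle_graph (m - l)).
Proof.
move=> _ _; case: m => [|[|s]] // _ n.
have cycleE (j : 'I_s) : chromsym n (cycle_graph (s.+2 - j.+1)) = cycle_poly n (s.+1 - j).
  rewrite subSS; have [j' ->] : exists j', (s.+1 - j = j'.+2)%N.
    by exists (s.-1 - j)%N; have := ltn_ord j; lia.
  exact: chromsym_cycle.
rewrite big_add1 big_mkord /= addnS subn1 /=.
under [X in _ - X]eq_bigr => j _ do rewrite cycleE addnS subn1 /=.
rewrite /spider2 !chromsym_spider big_distrr.
under [X in _ - X]eq_bigr => j _ do rewrite chromsym_spider big_distrl.
rewrite /= exchange_big -sumrB; apply: eq_bigr => c _ /=.
rewrite !leg_chromsym_K1 leg_chromsym_cycle.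
rewrite [X in _ = _ - X](_ : _ = 'X_c * (leg_chromsym G g c * leg_chromsym H h c) *
           \sum_(j < s) walks_from (k + j) c * cycle_poly n (s.+1 - j)); first by ring.
by rewrite [RHS]big_distrr; apply: eq_bigr => j _; rewrite /= leg_chromsym_K1; ring.
Qed.
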